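(* For every regex $R \in \mathrm{RE}^{\#}$ there exist regexes $A, B, E \in \mathrm{RE}_c$ (lookaround-free) such that $$R \equiv (?{<}{=}B)\cdot E\cdot (?{=}A),$$ i.e. for every span $\sigma$ (in every string), $\sigma \models R$ iff $\sigma \models (?{<}{=}B)\cdot E\cdot(?{=}A)$.
   Context: Let $\Sigma$ be a (possibly infinite) set of characters and $\Psi$ an effective Boolean algebra of predicates over $\Sigma$: each $\psi\in\Psi$ has a denotation $[\![\psi]\!]\subseteq\Sigma$, $\Psi$ contains $\bot,\top$ with $[\![\bot]\!]=\emptyset$, $[\![\top]\!]=\Sigma$, and is closed under $\vee,\wedge,\neg$ with the set-theoretic meaning. For a string $s\in\Sigma^*$, a location in $s$ is a pair $(s,i)$ with $0\le i\le |s|$; it is initial if $i=0$, final if $i=|s|$; for nonfinal $(s,i)$, $\mathrm{head}((s,i))=s_i$ (the $i$-th character, 0-indexed). A span in $s$ is a pair $\sigma=((s,i),(s,j))$ with $i\le j$; its width is $j-i$; write $\sigma.1=(s,i)$, $\sigma.2=(s,j)$. The class RE of regexes is given by the grammar $R ::= \psi \mid \varepsilon \mid R_1|R_2 \mid R_1\& R_2 \mid R_1\cdot R_2 \mid R^{\{m\}} \mid R^* \mid {\sim}R \mid (?{<}{=}R) \mid (?{<}!R) \mid (?{=}R) \mid (?!R)$ with $\psi\in\Psi$, $m\ge1$ an integer, and $R^{\{0\}}:=\varepsilon$. Semantics ($\sigma\models R$, all locations $x$ range over locations of the same string $s$, and pairs $(x,y)$ are required to be spans, i.e. $x$ not after $y$):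 $\sigma\models\varepsilon$ iff width $0$; $\sigma\models\psi$ iff width $1$ and $\mathrm{head}(\sigma.1)\in[\![\psi]\!]$; $|$, $\&$, ${\sim}$ are union, intersection and complement (over spans); $\sigma\models L\cdot R$ iff $\exists x:(\sigma.1,x)\models L$ and $(x,\sigma.2)\models R$; $\sigma\models R^{\{m\}}$ iff $\exists x:(\sigma.1,x)\models R$ and $(x,\sigma.2)\models R^{\{m-1\}}$; $\sigma\models R^*$ iff $\exists m\ge0:\sigma\models R^{\{m\}}$; $\sigma\models(?{=}R)$ iff width $0$ and $\exists x:(\sigma.1,x)\models R$; $\sigma\models(?!R)$ iff width $0$ and no such $x$ exists; $\sigma\models(?{<}{=}R)$ iff width $0$ and $\exists x:(x,\sigma.2)\models R$; $\sigma\models(?{<}!R)$ iff width $0$ and no such $x$ exists. For a location $x$, $x\models R$ means $(x,x)\models R$. $R\equiv S$ means the two regexes are matched by exactly the same spans (in all strings). Define $\backslash A := (?{<}!\top)$ (matches exactly at initial locations) and $\backslash z := (?!\top)$ (matches exactly at final locations), and $\_* := \top^*$. $\mathrm{RE}_c$ (lookaround-free regexes) is given by $E ::= \backslash A \mid \backslash z \mid \psi\mid\varepsilon\mid E_1|E_2\mid E_1\& E_2\mid E_1\cdot E_2\mid E^{\{m\}}\mid E^*\mid {\sim}E$. $\mathrm{RE}^{\#}$ is given by $R ::= E \mid R_1\& R_2 \mid (?{<}{=}E)\cdot R \mid (?{<}!E)\cdot R \mid R\cdot(?{=}E)\mid R\cdot(?!E)$ with $E\in\mathrm{RE}_c$.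 *)

From Stdlib Require Import List Arith.
Import ListNotations.
Set Implicit Arguments.

Record EBA (Sigma : Type) := {
  pred_ty : Type;
  den : pred_ty -> Sigma -> Prop;
  pbot : pred_ty;
  ptop : pred_ty;
  por : pred_ty -> pred_ty -> pred_ty;
  pand : pred_ty -> pred_ty -> pred_ty;
  pnot : pred_ty -> pred_ty;
  den_bot : forall c, ~ den pbot c;
  den_top : forall c, den ptop c;
  den_or : forall p q c, den (por p q) c <-> den p c \/ den q c;
  den_and : forall p q c, den (pand p q) c <-> den p c /\ den q c;
  den_not : forall p c, den (pnot p) c <-> ~ den p c;
  sat_dec : forall p, {exists c, den p c} + {~ exists c, den p c}
}.

Section Regex.
Variable Sigma : Type.
Variable A : EBA Sigma.

Inductive regex : Type :=
| RPred : pred_ty A -> regex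
| REps : regex
| RAlt : regex -> regex -> regex
| RInter : regex -> regex -> regex
| RCat : regex -> regex -> regex
| RRep : nat -> regex -> regex
| RStar : regex -> regex
| RCompl : regex -> regex
| RLookBehind : regex -> regex
| RNegLookBehind : regex -> regex
| RLookAhead : regex -> regex
| RNegLookAhead : regex -> regex.

Fixpoint repP (P : nat -> nat -> Prop) (len m i j : nat) : Prop :=
  match m with
  | 0 => i = j /\ j <= len
  | S k => exists x, i <= x <= j /\ P i x /\ repP P len k x j
  end.

(* sem R s i j : the span ((s,i),(s,j)) matches R.  Every satisfied
   instance is a genuine span: i <= j <= |s|. *)
Fixpoint sem (R : regex) (s : list Sigma) (i j : nat) : Prop :=
  match R with
  | RPred p => j = S i /\ exists c, nth_error s i = Some c /\ den A p c
  | REps => i = j /\ j <= length s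
  | RAlt R1 R2 => sem R1 s i j \/ sem R2 s i j
  | RInter R1 R2 => sem R1 s i j /\ sem R2 s i j
  | RCat R1 R2 => exists x, i <= x <= j /\ sem R1 s i x /\ sem R2 s x j
  | RRep m R1 => repP (sem R1 s) (length s) m i j
  | RStar R1 => exists m, repP (sem R1 s) (length s) m i j
  | RCompl R1 => i <= j /\ j <= length s /\ ~ sem R1 s i j
  | RLookBehind R1 =>
      i = j /\ j <= length s /\ exists x, x <= j /\ sem R1 s x j
  | RNegLookBehind R1 =>
      i = j /\ j <= length s /\ ~ exists x, x <= j /\ sem R1 s x j
  | RLookAhead R1 =>
      i = j /\ j <= length s /\ exists x, i <= x <= length s /\ sem R1 s i x
  | RNegLookAhead R1 =>
      i = j /\ j <= length s /\ ~ exists x, i <= x <= length s /\ sem R1 s i x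
  end.

Definition RStart : regex := RNegLookBehind (RPred (ptop A)).
Definition REnd : regex := RNegLookAhead (RPred (ptop A)).

Inductive is_REc : regex -> Prop :=
| c_start : is_REc RStart
| c_end : is_REc REnd
| c_pred : forall p, is_REc (RPred p)
| c_eps : is_REc REps
| c_alt : forall E1 E2, is_REc E1 -> is_REc E2 -> is_REc (RAlt E1 E2)
| c_inter : forall E1 E2, is_REc E1 -> is_REc E2 -> is_REc (RInter E1 E2)
| c_cat : forall E1 E2, is_REc E1 -> is_REc E2 -> is_REc (RCat E1 E2)
| c_rep : forall m E, 1 <= m -> is_REc E -> is_REc (RRep m E)
| c_star : forall E, is_REc E -> is_REc (RStar E)
| c_compl : forall E, is_REc E -> is_REc (RCompl E).

Inductive is_REsharp : regex -> Prop :=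
| s_c : forall E, is_REc E -> is_REsharp E
| s_inter : forall R1 R2, is_REsharp R1 -> is_REsharp R2 -> is_REsharp (RInter R1 R2)
| s_lb : forall E R, is_REc E -> is_REsharp R -> is_REsharp (RCat (RLookBehind E) R)
| s_nlb : forall E R, is_REc E -> is_REsharp R -> is_REsharp (RCat (RNegLookBehind E) R)
| s_la : forall E R, is_REc E -> is_REsharp R -> is_REsharp (RCat R (RLookAhead E))
| s_nla : forall E R, is_REc E -> is_REsharp R -> is_REsharp (RCat R (RNegLookAhead E)).

Definition requiv (R S : regex) : Prop :=
  forall (s : list Sigma) (i j : nat), sem R s i j <-> sem S s i j.

End Regex.

Arguments RStart {Sigma A}.
Arguments REnd {Sigma A}.

(** Lookbehinds at the left end and lookaheads at the right end of a span
    only constrain its endpoints, so an [RE#] regex is determined by a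
    lookaround-free body together with one lookbehind condition on the start
    and one lookahead condition on the end.  These conditions can be merged:
    two lookbehinds [(?<=B1)] and [(?<=B2)] hold at [i] iff
    [(?<=(_* B1) & (_* B2))] does, and [(?<!B)] holds at [i] iff
    [(?<=\A ~(_* B))] does; symmetrically for lookaheads. *)
From Stdlib Require Import List Arith Lia ssreflect.

Section LookaroundNormalForm.
Context {Sigma : Type} {Alg : EBA Sigma}.

Implicit Types (B C E A R S : regex Alg) (s : list Sigma).

Lemma repP_span (P : nat -> nat -> Prop) len m i j :
  repP P len m i j -> i <= j <= len.
Proof.
elim: m i => [|m IH] i /=; first by lia.
by move=> [x [? [_ /IH]]]; lia.
Qed.

Lemma sem_span {R s i j} : sem R s i j -> i <= j <= length s.
Proof.
elim: R i j => /=; try (intros; lia).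
- move=> p i j [-> [c [Hc _]]].
  have : i < length s by apply/nth_error_Some; rewrite Hc.
  lia.
- by move=> R1 IH1 R2 IH2 i j [/IH1|/IH2].
- by move=> R1 IH1 R2 _ i j [/IH1].
- by move=> R1 IH1 R2 IH2 i j [x [_ [/IH1 ? /IH2 ?]]]; lia.
- by move=> m R1 _ i j; apply: repP_span.
- by move=> R1 _ i j [m]; apply: repP_span.
Qed.

Lemma sem_top s i : i < length s -> sem (RPred Alg (ptop Alg)) s i (S i).
Proof.
move=> Hi; split=> //.
case Hc: (nth_error s i) => [c|]; first by exists c; split=> //; apply: den_top.
by move/nth_error_None: Hc; lia.
Qed.

Definition any_star : regex Alg := RStar (RPred Alg (ptop Alg)).

Lemma sem_any_star s i j : i <= j <= length s -> sem any_star s i j.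
Proof.
move=> Hij; have [d Hj] : exists d, j = i + d by exists (j - i); lia.
subst j; elim: d i Hij => [|d IH] i Hid; first by exists 0; simpl; lia.
have [m Hm] : sem any_star s (S i) (S i + d) by apply: IH; lia.
exists (S m), (S i); split; first by lia.
split; first by apply: sem_top; lia.
by rewrite Nat.add_succ_r.
Qed.

Lemma sem_start s i j : sem (@RStart _ Alg) s i j <-> i = 0 /\ j = 0.
Proof.
split.
- move=> [-> [Hj Hnot]]; suff : j = 0 by lia.
  case: j Hj Hnot => [|j] Hj Hnot //.
  by case: Hnot; exists j; split; [lia | apply: sem_top; lia].
- move=> [-> ->]; split=> //; split; first by lia.
  by move=> [x [_ [? _]]].
Qed.

Lemma sem_end s i j : sem (@REnd _ Alg) s i j <-> i = j /\ j = length s.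
Proof.
split.
- move=> [-> [Hj Hnot]]; split=> //.
  case: (Nat.eq_dec j (length s)) => // Hne; case: Hnot.
  by exists (S j); split; [lia | apply: sem_top; lia].
- move=> [-> ->]; split=> //; split; first by lia.
  by move=> [x [? [? _]]]; lia.
Qed.

Definition behind B s i := exists x, x <= i /\ sem B s x i.
Definition ahead A s j := exists y, j <= y <= length s /\ sem A s j y.

Definition meet_behind B1 B2 : regex Alg :=
  RInter (RCat any_star B1) (RCat any_star B2).
Definition meet_ahead A1 A2 : regex Alg :=
  RInter (RCat A1 any_star) (RCat A2 any_star).
Definition not_behind B : regex Alg := RCat RStart (RCompl (RCat any_star B)).
Definition not_ahead A : regex Alg := RCat (RCompl (RCat A any_star)) REnd.

Lemma behind_meet B1 B2 s i : i <= length s ->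
  behind (meet_behind B1 B2) s i <-> behind B1 s i /\ behind B2 s i.
Proof.
move=> Hi; split.
- move=> [x [Hx [[x1 [? [_ H1]]] [x2 [? [_ H2]]]]]].
  by split; [exists x1 | exists x2]; split=> //; lia.
- move=> [[x1 [? H1]] [x2 [? H2]]]; exists 0; split; first by lia.
  split; [exists x1 | exists x2]; (split; first lia);
    by split=> //; apply: sem_any_star; lia.
Qed.

Lemma ahead_meet A1 A2 s j :
  ahead (meet_ahead A1 A2) s j <-> ahead A1 s j /\ ahead A2 s j.
Proof.
split.
- move=> [y [Hy [[y1 [? [H1 _]]] [y2 [? [H2 _]]]]]].
  by split; [exists y1 | exists y2]; split=> //; lia.
- move=> [[y1 [? H1]] [y2 [? H2]]]; exists (length s); split; first by lia.
  split; [exists y1 | exists y2]; (split; first lia);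
    by split=> //; apply: sem_any_star; lia.
Qed.

Lemma behind_not B s i : i <= length s -> behind (not_behind B) s i <-> ~ behind B s i.
Proof.
move=> Hi; split.
- move=> [x [Hx [z [Hz [/sem_start [Ex Ez] [_ [_ Hnot]]]]]]] [y [? HB]]; subst.
  by apply: Hnot; exists y; split; [lia | split=> //; apply: sem_any_star; lia].
- move=> Hnot; exists 0; split; first by lia.
  exists 0; split; first by lia.
  split; first by apply/sem_start.
  split; first by lia.
  split=> // [[x [? [_ HB]]]].
  by apply: Hnot; exists x; split=> //; lia.
Qed.

Lemma ahead_not A s j : j <= length s -> ahead (not_ahead A) s j <-> ~ ahead A s j.
Proof.
move=> Hj; split.
- move=> [y [Hy [z [Hz [[_ [_ Hnot]] /sem_end [Ez Ey]]]]]] [x [? HA]]; subst.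
  by apply: Hnot; exists x; split; [lia | split=> //; apply: sem_any_star; lia].
- move=> Hnot; exists (length s); split; first by lia.
  exists (length s); split; first by lia.
  split; last by apply/sem_end.
  split; first by lia.
  split; first by lia.
  move=> [y [? [HA _]]].
  by apply: Hnot; exists y; split=> //; lia.
Qed.

Lemma any_star_REc : is_REc any_star.
Proof. by do 2 constructor. Qed.

Lemma meet_behind_REc B1 B2 : is_REc B1 -> is_REc B2 -> is_REc (meet_behind B1 B2).
Proof. by move=> *; do 2 constructor=> //; apply: any_star_REc. Qed.

Lemma meet_ahead_REc A1 A2 : is_REc A1 -> is_REc A2 -> is_REc (meet_ahead A1 A2).
Proof. by move=> *; do 2 constructor=> //; apply: any_star_REc. Qed.

Lemma not_behind_REc B : is_REc B -> is_REc (not_behind B).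
Proof. by move=> *; do 3 constructor=> //; apply: any_star_REc. Qed.

Lemma not_ahead_REc A : is_REc A -> is_REc (not_ahead A).
Proof. by move=> *; do 3 constructor=> //; apply: any_star_REc. Qed.

Definition lookaround_form B E A : regex Alg :=
  RCat (RCat (RLookBehind B) E) (RLookAhead A).

Lemma sem_lookaround_form B E A s i j :
  sem (lookaround_form B E A) s i j <-> behind B s i /\ sem E s i j /\ ahead A s j.
Proof.
split.
- by move=> [x [Hx [[z [Hz [[Ez [_ HB]] HE]]] [Ex [_ HA]]]]]; subst.
- move=> [HB [HE HA]]; have Hij := sem_span HE.
  exists j; split; first by lia.
  split; last by split; [|split; [lia|]].
  exists i; split; first by lia.
  by split=> //; split; [|split; [lia|]].
Qed.

Lemma requiv_refl R : requiv R R.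
Proof. by []. Qed.

Lemma requiv_trans R S S' : requiv R S -> requiv S S' -> requiv R S'.
Proof. by move=> H1 H2 s i j; rewrite H1 H2. Qed.

Lemma requiv_inter R R' S S' :
  requiv R R' -> requiv S S' -> requiv (RInter R S) (RInter R' S').
Proof. by move=> HR HS s i j /=; rewrite HR HS. Qed.

Lemma requiv_cat R R' S S' :
  requiv R R' -> requiv S S' -> requiv (RCat R S) (RCat R' S').
Proof.
move=> HR HS s i j /=.
by split=> [[x [? [/HR ? /HS ?]]] | [x [? [/HR ? /HS ?]]]]; exists x.
Qed.

Lemma lookaround_form_REc E :
  requiv E (lookaround_form (REps Alg) E (REps Alg)).
Proof.
move=> s i j; rewrite sem_lookaround_form; split; last by case=> _ [].
move=> HE; have Hij := sem_span HE.
split; first by exists i; split; [|split]; lia.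
by split=> //; exists j; split; [|split]; lia.
Qed.

Lemma lookaround_form_inter B1 E1 A1 B2 E2 A2 :
  requiv (RInter (lookaround_form B1 E1 A1) (lookaround_form B2 E2 A2))
         (lookaround_form (meet_behind B1 B2) (RInter E1 E2) (meet_ahead A1 A2)).
Proof.
move=> s i j; cbn [sem]; rewrite !sem_lookaround_form ahead_meet; cbn [sem].
split=> [[[? [HE ?]] [? [? ?]]] | [HB [[HE ?] ?]]];
  have Hij := sem_span HE.
- by rewrite behind_meet; try lia; tauto.
- by move: HB; rewrite behind_meet; try lia; tauto.
Qed.

(* [L] is any regex testing a lookbehind condition, e.g. [(?<=C)] or [(?<!C)]. *)
Lemma lookaround_form_cat_behind L C B E A :
  (forall s i j, sem L s i j <-> i = j /\ j <= length s /\ behind C s i) ->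
  requiv (RCat L (lookaround_form B E A)) (lookaround_form (meet_behind C B) E A).
Proof.
move=> HL s i j; rewrite sem_lookaround_form; split.
- move=> [x [Hx [/HL [Ex [Hi HC]] /sem_lookaround_form [HB HEA]]]]; subst x.
  by split=> //; apply/behind_meet.
- move=> [HBB [HE HA]]; have Hij := sem_span HE.
  move/behind_meet: HBB => [|HC HB]; first by lia.
  exists i; split; first by lia.
  by split; [apply/HL; split; [|split; [lia|]] | apply/sem_lookaround_form].
Qed.

Lemma lookaround_form_cat_ahead L C B E A :
  (forall s i j, sem L s i j <-> i = j /\ j <= length s /\ ahead C s i) ->
  requiv (RCat (lookaround_form B E A) L) (lookaround_form B E (meet_ahead A C)).
Proof.
move=> HL s i j; rewrite sem_lookaround_form ahead_meet; split.
- by move=> [x [Hx [/sem_lookaround_form [HB [HE HA]] /HL [Ex [_ HC]]]]]; subst x.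
- move=> [HB [HE [HA HC]]]; have Hij := sem_span HE.
  exists j; split; first by lia.
  by split; [apply/sem_lookaround_form | apply/HL; split; [|split; [lia|]]].
Qed.

Lemma sem_RLookBehind C s i j :
  sem (RLookBehind C) s i j <-> i = j /\ j <= length s /\ behind C s i.
Proof. by split=> -[-> H]. Qed.

Lemma sem_RLookAhead C s i j :
  sem (RLookAhead C) s i j <-> i = j /\ j <= length s /\ ahead C s i.
Proof. reflexivity. Qed.

Lemma sem_RNegLookBehind C s i j :
  sem (RNegLookBehind C) s i j <-> i = j /\ j <= length s /\ behind (not_behind C) s i.
Proof.
by split=> -[-> [Hj H]]; do 2 (split=> //); apply/behind_not.
Qed.

Lemma sem_RNegLookAhead C s i j :
  sem (RNegLookAhead C) s i j <-> i = j /\ j <= length s /\ ahead (not_ahead C) s i.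
Proof.
by split=> -[-> [Hj H]]; do 2 (split=> //); apply/ahead_not.
Qed.

Definition lookaround_normalizable R : Prop :=
  exists A B E, is_REc A /\ is_REc B /\ is_REc E /\ requiv R (lookaround_form B E A).

Lemma REc_normalizable E : is_REc E -> lookaround_normalizable E.
Proof.
move=> HE; exists (REps Alg), (REps Alg), E.
by do 2 (split; first exact: c_eps); split; last exact: lookaround_form_REc.
Qed.

Lemma normalizable_inter R S :
  lookaround_normalizable R -> lookaround_normalizable S ->
  lookaround_normalizable (RInter R S).
Proof.
move=> [A1 [B1 [E1 [HA1 [HB1 [HE1 HR]]]]]] [A2 [B2 [E2 [HA2 [HB2 [HE2 HS]]]]]].
exists (meet_ahead A1 A2), (meet_behind B1 B2), (RInter E1 E2).
split; first by apply: meet_ahead_REc.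
split; first by apply: meet_behind_REc.
split; first by constructor.
apply: requiv_trans (lookaround_form_inter _ _ _ _ _ _).
exact: requiv_inter.
Qed.

Lemma normalizable_cat_behind L C R : is_REc C ->
  (forall s i j, sem L s i j <-> i = j /\ j <= length s /\ behind C s i) ->
  lookaround_normalizable R -> lookaround_normalizable (RCat L R).
Proof.
move=> HC HL [A [B [E [HA [HB [HE HR]]]]]].
exists A, (meet_behind C B), E; do 2 (split=> //); first exact: meet_behind_REc.
split=> //; apply: requiv_trans (lookaround_form_cat_behind _ _ B E A HL).
exact: requiv_cat (requiv_refl L) HR.
Qed.

Lemma normalizable_cat_ahead L C R : is_REc C ->
  (forall s i j, sem L s i j <-> i = j /\ j <= length s /\ ahead C s i) ->
  lookaround_normalizable R -> lookaround_normalizable (RCat R L).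
Proof.
move=> HC HL [A [B [E [HA [HB [HE HR]]]]]].
exists (meet_ahead A C), B, E; split; first exact: meet_ahead_REc.
do 2 (split=> //); apply: requiv_trans (lookaround_form_cat_ahead _ _ B E A HL).
exact: requiv_cat HR (requiv_refl L).
Qed.

End LookaroundNormalForm.

Theorem theorem1 (Sigma : Type) (Alg : EBA Sigma) (R : regex Alg) :
  is_REsharp R ->
  exists A B E : regex Alg,
    is_REc A /\ is_REc B /\ is_REc E /\
    requiv R (RCat (RCat (RLookBehind B) E) (RLookAhead A)).
Proof.
move=> HR; change (lookaround_normalizable R).
elim: HR => {R} [E|R S _ HR _ HS|C R HC _ HR|C R HC _ HR|C R HC _ HR|C R HC _ HR].
- exact: REc_normalizable.
- exact: normalizable_inter.
- exact: normalizable_cat_behind HC (sem_RLookBehind C) HR.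
- exact: normalizable_cat_behind (not_behind_REc _ HC) (sem_RNegLookBehind C) HR.
- exact: normalizable_cat_ahead HC (sem_RLookAhead C) HR.
- exact: normalizable_cat_ahead (not_ahead_REc _ HC) (sem_RNegLookAhead C) HR.
Qed.
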